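(* Let $\mathbb{K}$ be a field, $S=\mathbb{K}[x_1,\ldots,x_n]$, and let $I\subseteq S$ be a support-$2$ monomial ideal such that the girth of $G(I)$ is at least six. Let $\{x_i,x_j\}\in E(G(I))$ be such that $\alpha_{i,j}\geq 2$. Suppose that $d(x_i,x_\ell)\ge 2$ for every leaf vertex $x_\ell$ of $G(I)$, or that $d(x_j,x_\ell)\ge 2$ for every leaf vertex $x_\ell$ of $G(I)$. Then $I^{(1)}\neq I$.
   Context: For a monomial ideal $I$, $\mathcal{G}(I)$ denotes its minimal set of monomial generators. $I$ is a support-$2$ monomial ideal if $\mathcal{G}(I)\subseteq\{x_i^ax_j^b : 1\le i<j\le n,\ a,b\ge 1\}$. The underlying simple graph $G(I)$ has vertices $x_1,\ldots,x_n$ and an edge $\{x_i,x_j\}$ whenever some element of $\mathcal{G}(I)$ has support $\{x_i,x_j\}$. For an edge $\{x_i,x_j\}$, $\alpha_{i,j}$ is the number of elements of $\mathcal{G}(I)$ whose support is exactly $\{x_i,x_j\}$. The girth of a graph is the length of its shortest cycle; a leaf is a vertex of degree $1$; $d(x,y)$ is the length of a shortest path between $x$ and $y$. $I^{(1)}=\bigcap_{P\in\mathrm{MinAss}(I)}(IS_P\cap S)$, the intersection of the primary components of $I$ at its minimal primes. *)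

From HB Require Import structures.
From mathcomp Require Import all_boot all_order all_algebra.
From mathcomp Require Import mpoly.
Set Implicit Arguments. Unset Strict Implicit. Unset Printing Implicit Defensive.
Import GRing.Theory.
Local Open Scope ring_scope.

Section MonIdeals.
Variables (K : fieldType) (n : nat).
Local Notation S := {mpoly K[n]}.

Definition polyset := S -> Prop.

Definition ideal_gen (G : seq S) : polyset :=
  fun f => exists h : S -> S, f = \sum_(g <- G) h g * g.

Definition is_ideal (J : polyset) : Prop :=
  [/\ J 0, (forall a b, J a -> J b -> J (a + b)) & (forall r a, J a -> J (r * a))].

Definition prime_ideal (P : polyset) : Prop :=
  [/\ is_ideal P, ~ P 1 & forall a b, P (a * b) -> P a \/ P b].

Definition subideal (J J' : polyset) : Prop := forall f, J f -> J' f.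

Definition minimal_prime (I P : polyset) : Prop :=
  [/\ prime_ideal P, subideal I P &
      forall Q, prime_ideal Q -> subideal I Q -> subideal Q P -> subideal P Q].

(* I S_P \cap S = { f | exists g \notin P, g f \in I } *)
Definition loc_contract (I P : polyset) : polyset :=
  fun f => exists g, ~ P g /\ I (g * f).

(* I^{(1)} : intersection of I S_P \cap S over the minimal primes P of I *)
Definition symb1 (I : polyset) : polyset :=
  fun f => forall P, minimal_prime I P -> loc_contract I P f.

Definition msupp (m : 'X_{1..n}) : {set 'I_n} := [set i | 0 < m i]%N.

Definition mdiv (m m' : 'X_{1..n}) : bool := [forall i, m i <= m' i]%N.

Definition support2 (m : 'X_{1..n}) : Prop :=
  exists i j : 'I_n, (i < j)%N /\ msupp m = [set i; j].

(* gens is the minimal monomial generating set G(I) of the ideal it generates: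
   a duplicate-free list of monomials none of which divides another one. *)
Definition minimal_monomial_gens (gens : seq 'X_{1..n}) : Prop :=
  uniq gens /\ forall m m', m \in gens -> m' \in gens -> m != m' -> ~~ mdiv m m'.

Definition mon_ideal (gens : seq 'X_{1..n}) : polyset :=
  ideal_gen [seq 'X_[m] | m <- gens].

Definition gadj (gens : seq 'X_{1..n}) : rel 'I_n :=
  fun i j => (i != j) && has (fun m => msupp m == [set i; j]) gens.

Definition alpha (gens : seq 'X_{1..n}) (i j : 'I_n) : nat :=
  count (fun m => msupp m == [set i; j]) gens.

Definition is_leaf (e : rel 'I_n) (l : 'I_n) : bool := #|[set k | e l k]| == 1%N.

Definition girth_ge (e : rel 'I_n) (k : nat) : Prop :=
  forall c : seq 'I_n, (3 <= size c)%N -> (size c < k)%N -> uniq c -> ~~ cycle e c.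

Definition dist_ge (e : rel 'I_n) (x y : 'I_n) (k : nat) : Prop :=
  forall p : seq 'I_n, path e x p -> last x p = y -> (k <= size p)%N.

End MonIdeals.

From Pilot Require Import Defs.
From HB Require Import structures.
From mathcomp Require Import all_boot all_order all_algebra.
From mathcomp Require Import mpoly.
From Stdlib Require Import Classical ClassicalDescription.
Set Implicit Arguments. Unset Strict Implicit. Unset Printing Implicit Defensive.
Import GRing.Theory.
Local Open Scope ring_scope.

(* Take generators A, B of I supported on the edge {x_i, x_j} with B_j < A_j, and let the
   witness be x_i^(A_i) x_j^(B_j) times a high power of every vertex w reached from x_i by a
   path x_i - x_k - w with x_k <> x_j.  Since the girth is at least six, {x_i, x_j} is the only
   edge among the variables of the witness, so a generator dividing it divides A, hence is A,
   whose x_j-exponent is too large: the witness is not in I.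
   It is in I^(1): for a minimal prime P, if x_i is not in P then x_i^(B_i) times the witness
   is divisible by B.  Otherwise some generator x_i^a x_k^b has x_k outside P.  If x_k = x_j
   multiply by a power of x_j to reach A; if not, x_k is not a leaf, so it has a neighbour
   w <> x_i, which carries a high power in the witness, and a power of x_k times the witness
   is divisible by the generator on {x_k, w}. *)

Section MonomialIdeal.
Variables (K : fieldType) (n : nat) (gens : seq 'X_{1..n}).
Hypothesis gens_uniq : uniq gens.
Local Notation I := (@mon_ideal K n gens).

Lemma mon_idealM r a : I a -> I (r * a).
Proof.
case=> h ->; exists (fun g => r * h g); rewrite mulr_sumr.
by apply: eq_bigr => g _; rewrite mulrA.
Qed.

Lemma mon_ideal_gen m : m \in gens -> I 'X_[m].
Proof.
move=> gm; exists (fun p => (p@_m)%:MP); rewrite big_map (bigD1_seq m) //=.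
rewrite mcoeffX eqxx mul1r big1 ?addr0 // => g /negbTE gm'.
by rewrite mcoeffX gm' mul0r.
Qed.

Lemma mon_ideal_lem m M : m \in gens -> (m <= M)%MM -> I 'X_[M].
Proof.
by move=> gm /submK <-; rewrite mpolyXD; apply/mon_idealM/mon_ideal_gen.
Qed.

Lemma mon_idealX M : I 'X_[M] -> exists2 m, m \in gens & (m <= M)%MM.
Proof.
case=> h e; apply: NNPP => noDiv.
have := congr1 (mcoeff M) e; rewrite mcoeffX eqxx raddf_sum big_map /=.
rewrite big1_seq => [/eqP|g /= gg]; first by rewrite oner_eq0.
rewrite mcoeffM big1 // => k /eqP eM; rewrite mcoeffX.
case: eqP => [ek|_]; last by rewrite mulr0.
by case: noDiv; exists g; rewrite // eM ek lem_addl.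
Qed.

End MonomialIdeal.

Section PrimeIdeal.
Variables (K : fieldType) (n : nat) (P : polyset K n).

Lemma is_ideal_sum (T : Type) (r : seq T) (F : T -> {mpoly K[n]}) :
  is_ideal P -> (forall t, P (F t)) -> P (\sum_(t <- r) F t).
Proof.
case=> P0 PD _ PF; elim: r => [|a r IH]; first by rewrite big_nil.
by rewrite big_cons; apply: PD.
Qed.

Lemma is_ideal_X (m : 'X_{1..n}) t : is_ideal P -> P 'X_t -> (0 < m t)%N -> P 'X_[m].
Proof.
case=> _ _ PM Pt mt; have le : (U_(t) <= m)%MM by rewrite lep1mP -lt0n.
by rewrite -(submK le) mpolyXD; apply: PM.
Qed.

Hypothesis P_prime : prime_ideal P.

Lemma prime_ideal_prod (T : Type) (r : seq T) (F : T -> {mpoly K[n]}) :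
  P (\prod_(t <- r) F t) -> exists t, P (F t).
Proof.
case: P_prime => _ P1 PM; elim: r => [|a r IH]; first by rewrite big_nil.
by rewrite big_cons => /PM [Pa|/IH //]; exists a.
Qed.

Lemma prime_ideal_expr x e : P (x ^+ e) -> (0 < e)%N /\ P x.
Proof.
case: P_prime => _ P1 PM; elim: e => [|e IH]; first by rewrite expr0.
by rewrite exprS => /PM [|/IH []].
Qed.

Lemma prime_idealX (m : 'X_{1..n}) : P 'X_[m] -> exists t, (0 < m t)%N /\ P 'X_t.
Proof.
rewrite mpolyXE_id => /prime_ideal_prod [t /prime_ideal_expr].
by exists t.
Qed.

End PrimeIdeal.

Lemma prime_ideal_kernel (K : fieldType) (n : nat) (R : idomainType)
    (f : {rmorphism {mpoly K[n]} -> R}) :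
  prime_ideal (fun p => f p = 0).
Proof.
split; first split.
- exact: rmorph0.
- by move=> a b fa fb; rewrite rmorphD fa fb addr0.
- by move=> r a fa; rewrite rmorphM fa mulr0.
- by rewrite rmorph1 => /eqP; rewrite oner_eq0.
- by move=> a b /eqP; rewrite rmorphM mulf_eq0 => /orP [] /eqP; [left|right].
Qed.

Section ZeroVars.
Variables (K : fieldType) (n : nat) (Z : pred 'I_n).

Definition zero_vars : n.-tuple {mpoly K[n]} := [tuple if Z t then 0 else 'X_t | t < n].

Lemma comp_zero_varsXU t : ~~ Z t -> 'X_t \mPo zero_vars = 'X_t.
Proof. by move/negbTE=> Zt; rewrite comp_mpolyXU -tnth_nth tnth_mktuple Zt. Qed.

Lemma comp_zero_varsX (m : 'X_{1..n}) :
  'X_[m] \mPo zero_vars = if [exists t, Z t && (0 < m t)%N] then 0 else 'X_[m].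
Proof.
rewrite comp_mpolyX; case: existsP => [[t /andP [Zt mt]]|noZ].
  by rewrite (bigD1 t) //= tnth_mktuple Zt expr0n gtn_eqF // mul0r.
rewrite [RHS]mpolyXE_id; apply: eq_bigr => t _; rewrite tnth_mktuple.
case: ifP => // Zt; case: (posnP (m t)) => [->|mt]; first by rewrite !expr0.
by case: noZ; exists t; rewrite Zt.
Qed.

Lemma sub_comp_zero_vars (P : polyset K n) (p : {mpoly K[n]}) :
  is_ideal P -> (forall t, Z t -> P 'X_t) -> P (p - (p \mPo zero_vars)).
Proof.
move=> Pideal PZ; have [_ _ PM] := Pideal.
rewrite comp_mpolyEX {1}[p]mpolyE -sumrB; apply: is_ideal_sum => // m.
rewrite -scalerBr -mul_mpolyC; apply: PM; rewrite comp_zero_varsX.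
case: existsP => [[t /andP [Zt mt]]|_]; last by rewrite subrr; case: Pideal.
by rewrite subr0; apply: is_ideal_X (PZ t Zt) mt.
Qed.

End ZeroVars.

Arguments zero_vars {K n}.

(* If every generator through x_k had another variable in P, killing the variables of P
   other than x_k would send I to 0, and its kernel would be a prime between I and P
   missing x_k. *)
Lemma minimal_prime_mon_ideal_var (K : fieldType) (n : nat) (gens : seq 'X_{1..n})
    (P : polyset K n) k :
  uniq gens -> minimal_prime (mon_ideal gens) P -> P 'X_k ->
  exists2 m, m \in gens & (0 < m k)%N /\ (forall t, t != k -> (0 < m t)%N -> ~ P 'X_t).
Proof.
move=> gens_uniq [P_prime IP P_min] Pk; apply: NNPP => noGen.
have [Z ZE] : exists Z : pred 'I_n, forall t, Z t <-> t != k /\ P 'X_t.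
  exists (fun t => (t != k) && if excluded_middle_informative (P 'X_t) then true else false).
  by move=> t; case: excluded_middle_informative => /= ?; rewrite ?andbT ?andbF; split=> [|[]].
have IQ : subideal (@mon_ideal K n gens) (fun p => p \mPo zero_vars Z = 0).
  move=> f [h ->]; rewrite raddf_sum big_map big1_seq // => g /= gg.
  rewrite rmorphM /= comp_zero_varsX; case: existsP => [_|noZ]; first by rewrite mulr0.
  have [t [gt Pt]] := prime_idealX P_prime (IP _ (mon_ideal_gen K gens_uniq gg)).
  have noZ' t' : t' != k -> (0 < g t')%N -> ~ P 'X_t'.
    by move=> t'k gt' Pt'; apply: noZ; exists t'; rewrite gt' andbT; apply/ZE.
  have [tk|tk] := eqVneq t k; last by case: (noZ' t tk gt Pt).
  by case: noGen; exists g => //; split; [rewrite -tk | exact: noZ'].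
have QP : subideal (fun p : {mpoly K[n]} => p \mPo zero_vars Z = 0) P.
  move=> p Qp; have [P_ideal _ _] := P_prime.
  have PZ t : Z t -> P 'X_t by case/ZE.
  have := sub_comp_zero_vars p P_ideal PZ.
  by rewrite Qp subr0.
have Zk : ~~ Z k by apply/negP => /ZE [/eqP].
have /(_ _ Pk) := P_min (fun p => p \mPo zero_vars Z = 0) (prime_ideal_kernel _) IQ QP.
rewrite comp_zero_varsXU // => /(congr1 (mcoeff U_(k))).
by rewrite mcoeffXU eqxx mcoeff0 => /eqP; rewrite oner_eq0.
Qed.

Section GirthSix.
Variables (n : nat) (e : rel 'I_n).
Hypotheses (e_irr : irreflexive e) (e_girth : girth_ge e 6).

Lemma rel_neq a b : e a b -> a != b.
Proof. by apply: contraTneq => ->; rewrite e_irr. Qed.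

Lemma rel_neq' a b : e a b -> b != a.
Proof. by rewrite eq_sym; apply: rel_neq. Qed.

Lemma girth6_no_triangle a b c : e a b -> e b c -> ~~ e c a.
Proof.
move=> ab bc; apply/negP => ca.
have U : uniq [:: a; b; c].
  by rewrite /= !inE !negb_or (rel_neq ab) (rel_neq bc) (rel_neq' ca).
by have := @e_girth [:: a; b; c] isT isT U; rewrite /= ab bc ca.
Qed.

Lemma girth6_no_square a b c d : e a b -> e b c -> e c d -> a != c -> b != d -> ~~ e d a.
Proof.
move=> ab bc cd ac bd; apply/negP => da.
have U : uniq [:: a; b; c; d].
  by rewrite /= !inE !negb_or (rel_neq ab) (rel_neq bc) (rel_neq cd) (rel_neq' da) ac bd.
by have := @e_girth [:: a; b; c; d] isT isT U; rewrite /= ab bc cd da.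
Qed.

Lemma girth6_no_pentagon a b c d x : e a b -> e b c -> e c d -> e d x ->
  a != c -> a != d -> b != d -> b != x -> c != x -> ~~ e x a.
Proof.
move=> ab bc cd dx ac ad bd bx cx; apply/negP => xa.
have U : uniq [:: a; b; c; d; x].
  rewrite /= !inE !negb_or (rel_neq ab) (rel_neq bc) (rel_neq cd) (rel_neq dx).
  by rewrite (rel_neq' xa) ac ad bd bx cx.
by have := @e_girth [:: a; b; c; d; x] isT isT U; rewrite /= ab bc cd dx xa.
Qed.

End GirthSix.

Lemma adj_not_dist_ge2 (n : nat) (e : rel 'I_n) x y : e x y -> ~ dist_ge e x y 2.
Proof. by move=> xy /(_ [:: y]); rewrite /= xy => /(_ isT erefl). Qed.

Lemma not_leaf_nbr (n : nat) (e : rel 'I_n) x y :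
  ~~ is_leaf e y -> e y x -> exists2 z, e y z & z != x.
Proof.
move=> yleaf yx; case: (pickP (fun z => e y z && (z != x))) => [z /andP []|none].
  by exists z.
suff nbrs : [set z | e y z] = [set x] by rewrite /is_leaf nbrs cards1 in yleaf.
apply/setP => z; rewrite !inE; apply/idP/eqP => [yz|->//].
by apply/eqP; move: (none z); rewrite yz /= => /negbFE.
Qed.

Section SupportTwo.
Variable n : nat.
Implicit Types (m M : 'X_{1..n}) (gens : seq 'X_{1..n}).

Lemma msupp2_gt0 m i j t : Defs.msupp m = [set i; j] -> (0 < m t)%N = (t == i) || (t == j).
Proof. by move/setP/(_ t); rewrite !inE. Qed.

Lemma msupp2_lem m M i j : Defs.msupp m = [set i; j] ->
  (m i <= M i)%N -> (m j <= M j)%N -> (m <= M)%MM.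
Proof.
move=> supp_m hi hj; apply/mnm_lepP => t.
by case: (posnP (m t)) => [->//|]; rewrite (msupp2_gt0 _ supp_m) => /orP [] /eqP ->.
Qed.

Lemma support2_gt0 m k : support2 m -> (0 < m k)%N ->
  exists2 l, l != k & Defs.msupp m = [set k; l].
Proof.
case=> [x [y [xy supp_m]]]; rewrite (msupp2_gt0 _ supp_m) => /orP [] /eqP ->.
  by exists y; rewrite // neq_ltn xy orbT.
by exists x; rewrite 1?setUC // neq_ltn xy.
Qed.

Lemma gadj_sym gens x y : gadj gens x y = gadj gens y x.
Proof. by rewrite /gadj eq_sym setUC. Qed.

Lemma gadj_irr gens : irreflexive (gadj gens).
Proof. by move=> x; rewrite /gadj eqxx. Qed.

Lemma alpha_sym gens x y : alpha gens x y = alpha gens y x.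
Proof. by rewrite /alpha setUC. Qed.

Lemma gadjP gens x y : gadj gens x y -> exists2 m, m \in gens & Defs.msupp m = [set x; y].
Proof. by case/andP => _ /hasP [m gm /eqP]; exists m. Qed.

Lemma gadj_gen gens m x y : m \in gens -> Defs.msupp m = [set x; y] -> x != y -> gadj gens x y.
Proof. by move=> gm supp_m xy; rewrite /gadj xy; apply/hasP; exists m; rewrite ?supp_m. Qed.

Lemma alpha2_crossing_gens gens i j :
  minimal_monomial_gens gens -> (2 <= alpha gens i j)%N ->
  exists A B,
    [/\ A \in gens, B \in gens, Defs.msupp A = [set i; j] & Defs.msupp B = [set i; j]]
    /\ (A i < B i)%N /\ (B j < A j)%N.
Proof.
case=> gens_uniq gens_min; rewrite /alpha -size_filter.
have : uniq [seq m <- gens | Defs.msupp m == [set i; j]] by exact: filter_uniq.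
have edge_gen m : m \in [seq m <- gens | Defs.msupp m == [set i; j]] ->
    m \in gens /\ Defs.msupp m = [set i; j].
  by rewrite mem_filter => /andP [/eqP -> ->].
case: [seq m <- gens | Defs.msupp m == [set i; j]] edge_gen => [|m1 [|m2 s]] //= edge_gen.
rewrite inE negb_or => /andP [/andP [m12 _] _] _.
have [g1 s1] := edge_gen m1 (mem_head _ _).
have [g2 s2] : m2 \in gens /\ Defs.msupp m2 = [set i; j].
  by apply: edge_gen; rewrite !inE eqxx orbT.
have /forallPn [t] := gens_min _ _ g1 g2 m12; rewrite -ltnNge => lt21.
have /forallPn [t'] : ~~ mdiv m2 m1 by apply: gens_min; rewrite // eq_sym.
rewrite -ltnNge => lt12.
have : (0 < m1 t)%N by apply: leq_ltn_trans lt21.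
have : (0 < m2 t')%N by apply: leq_ltn_trans lt12.
rewrite (msupp2_gt0 _ s1) (msupp2_gt0 _ s2).
case/orP => /eqP e'; case/orP => /eqP e; subst t t'.
- by have := ltn_trans lt21 lt12; rewrite ltnn.
- by exists m1, m2.
- by exists m2, m1.
- by have := ltn_trans lt21 lt12; rewrite ltnn.
Qed.

End SupportTwo.

Lemma loc_contract_var (K : fieldType) (n : nat) (gens : seq 'X_{1..n}) (P : polyset K n)
    (k x : 'I_n) (m M : 'X_{1..n}) :
  uniq gens -> prime_ideal P -> ~ P 'X_k -> m \in gens -> Defs.msupp m = [set k; x] ->
  (m x <= M x)%N -> loc_contract (mon_ideal gens) P 'X_[M].
Proof.
move=> gens_uniq P_prime nPk gm supp_m mx; exists ('X_k ^+ m k); split.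
  by case/(prime_ideal_expr P_prime).
rewrite mpolyXn -mpolyXD; apply: (mon_ideal_lem K gens_uniq gm).
apply: (msupp2_lem supp_m); rewrite mnmDE; last exact: leq_trans mx (leq_addl _ _).
by rewrite mulmnE mnm1E eqxx mul1n leq_addr.
Qed.

Lemma minimal_prime_adj_var (K : fieldType) (n : nat) (gens : seq 'X_{1..n})
    (P : polyset K n) i :
  uniq gens -> (forall m, m \in gens -> support2 m) ->
  minimal_prime (mon_ideal gens) P -> P 'X_i -> exists2 k, gadj gens i k & ~ P 'X_k.
Proof.
move=> gens_uniq gens_supp2 P_min Pi.
have [m gm [mi nP]] := minimal_prime_mon_ideal_var gens_uniq P_min Pi.
have [k ki supp_m] := support2_gt0 (gens_supp2 m gm) mi.
exists k; first by apply: gadj_gen gm supp_m _; rewrite eq_sym.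
by apply: nP ki _; rewrite (msupp2_gt0 _ supp_m) eqxx orbT.
Qed.

Section Witness.
Variables (K : fieldType) (n : nat) (gens : seq 'X_{1..n}).
Hypotheses (gens_min : minimal_monomial_gens gens)
  (gens_supp2 : forall m, m \in gens -> support2 m)
  (girth6 : girth_ge (gadj gens) 6).
Variables (i j : 'I_n) (A B : 'X_{1..n}).
Hypotheses (ij : gadj gens i j) (gA : A \in gens) (gB : B \in gens)
  (supp_A : Defs.msupp A = [set i; j]) (supp_B : Defs.msupp B = [set i; j])
  (BAj : (B j < A j)%N).

Local Notation adj := (gadj gens).
Local Notation I := (@mon_ideal K n gens).

Let adj_irr : irreflexive adj := @gadj_irr n gens.

Definition second_nbr (w : 'I_n) : bool :=
  [&& w != i, w != j & [exists k, [&& adj i k, k != j & adj k w]]].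

Definition exp_bound : nat := \sum_(m <- gens) mdeg m.

Definition witness : 'X_{1..n} :=
  [multinom ((t == i) * A i + (t == j) * B j + second_nbr t * exp_bound)%N | t < n].

Lemma gen_exp_le_bound m t : m \in gens -> (m t <= exp_bound)%N.
Proof.
move=> gm; apply: (@leq_trans (mdeg m)); first by rewrite mdegE (bigD1 t) //= leq_addr.
by rewrite /exp_bound (big_rem m gm) /= leq_addr.
Qed.

Lemma witness_i : witness i = A i.
Proof.
by rewrite mnmE /second_nbr eqxx (negbTE (rel_neq adj_irr ij)) /= mul1n !mul0n !addn0.
Qed.

Lemma witness_j : witness j = B j.
Proof.
by rewrite mnmE /second_nbr eqxx andbF (negbTE (rel_neq' adj_irr ij)) /= mul1n !mul0n !addn0.
Qed.

Lemma witness_second_nbr w : second_nbr w -> (exp_bound <= witness w)%N.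
Proof. by move=> w2; rewrite mnmE w2 mul1n leq_addl. Qed.

Lemma witness_gt0 t : (0 < witness t)%N -> [|| t == i, t == j | second_nbr t].
Proof. by rewrite mnmE; case: (t == i); case: (t == j); case: (second_nbr t). Qed.

Lemma second_nbrP w : second_nbr w ->
  exists k, [/\ w != i, w != j, adj i k, k != j & adj k w].
Proof. by case/and3P => wi wj /existsP [k /and3P [ik kj kw]]; exists k. Qed.

Lemma second_nbr_not_adj_i w : second_nbr w -> ~~ adj i w.
Proof.
case/second_nbrP => k [_ _ ik _ kw].
by rewrite gadj_sym; exact: (girth6_no_triangle adj_irr girth6 ik kw).
Qed.

Lemma second_nbr_not_adj_j w : second_nbr w -> ~~ adj j w.
Proof.
case/second_nbrP => k [wi _ ik kj kw]; apply/negP => jw.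
have wj : adj w j by rewrite gadj_sym.
have iw : i != w by rewrite eq_sym.
by have := girth6_no_square adj_irr girth6 ik kw wj iw kj; rewrite gadj_sym ij.
Qed.

Lemma second_nbr_not_adj w w' : second_nbr w -> second_nbr w' -> ~~ adj w w'.
Proof.
move=> w2 w2'; have [k [wi _ ik _ kw]] := second_nbrP w2.
have [k' [w'i _ ik' _ k'w']] := second_nbrP w2'.
apply/negP => ww'; have [ekk'|kk'] := eqVneq k k'.
  subst k'; by have := girth6_no_triangle adj_irr girth6 kw ww'; rewrite gadj_sym k'w'.
have wk' : w != k' by apply: contraNneq (second_nbr_not_adj_i w2) => ->.
have w'k : k != w' by apply: contraNneq (second_nbr_not_adj_i w2') => <-.
have w'k' : adj w' k' by rewrite gadj_sym.
have iw : i != w by rewrite eq_sym.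
have iw' : i != w' by rewrite eq_sym.
have := girth6_no_pentagon adj_irr girth6 ik kw ww' w'k' iw iw' w'k kk' wk'.
by rewrite gadj_sym ik'.
Qed.

Lemma witness_edge x y : (0 < witness x)%N -> (0 < witness y)%N -> adj x y ->
  [set x; y] = [set i; j].
Proof.
move=> /witness_gt0/or3P hx /witness_gt0/or3P hy.
case: hx => [/eqP->|/eqP->|x2]; case: hy => [/eqP->|/eqP->|y2];
  rewrite ?adj_irr ?(setUC [set j]) // => xy.
- by rewrite (negbTE (second_nbr_not_adj_i y2)) in xy.
- by rewrite (negbTE (second_nbr_not_adj_j y2)) in xy.
- by rewrite gadj_sym (negbTE (second_nbr_not_adj_i x2)) in xy.
- by rewrite gadj_sym (negbTE (second_nbr_not_adj_j x2)) in xy.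
- by rewrite (negbTE (second_nbr_not_adj x2 y2)) in xy.
Qed.

Lemma witness_notin : ~ I 'X_[witness].
Proof.
case/mon_idealX => m gm /mnm_lepP m_le.
have [x [y [xy supp_m]]] := gens_supp2 gm.
have pos t : (0 < m t)%N -> (0 < witness t)%N by move/leq_trans; apply.
have mx : (0 < m x)%N by rewrite (msupp2_gt0 _ supp_m) eqxx.
have my : (0 < m y)%N by rewrite (msupp2_gt0 _ supp_m) eqxx orbT.
have xy_adj : adj x y by apply: gadj_gen gm supp_m _; rewrite neq_ltn xy.
rewrite (witness_edge (pos _ mx) (pos _ my) xy_adj) in supp_m.
have mj := m_le j; rewrite witness_j in mj.
have mA : m = A.
  apply: contraTeq (gens_min.2 _ _ gm gA) _; apply: msupp2_lem supp_m _ _.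
    by rewrite -witness_i.
  exact: leq_trans mj (ltnW BAj).
by move: (leq_ltn_trans mj BAj); rewrite mA ltnn.
Qed.

Hypothesis leaf_far : forall l, is_leaf adj l -> dist_ge adj i l 2.

Lemma witness_loc_nbr P k : prime_ideal P -> adj i k -> ~ P 'X_k ->
  loc_contract I P 'X_[witness].
Proof.
move=> P_prime ik nPk; have gens_uniq := gens_min.1.
have [kj|kj] := eqVneq k j.
  have supp_A' : Defs.msupp A = [set k; i] by rewrite kj setUC.
  by apply: loc_contract_var gens_uniq P_prime nPk gA supp_A' _; rewrite witness_i.
have k_nonleaf : ~~ is_leaf adj k by apply/negP => /leaf_far; apply: adj_not_dist_ge2.
have ki : adj k i by rewrite gadj_sym.
have [w kw wi] := not_leaf_nbr k_nonleaf ki.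
have [m gm supp_m] := gadjP kw.
apply: (loc_contract_var gens_uniq P_prime nPk gm supp_m).
apply: leq_trans (gen_exp_le_bound w gm) (witness_second_nbr _).
rewrite /second_nbr wi /=; apply/andP; split.
  by apply: contraNneq _ (girth6_no_triangle adj_irr girth6 ik kw) => ->; rewrite gadj_sym.
by apply/existsP; exists k; rewrite ik kj kw.
Qed.

Lemma witness_symb1 : symb1 I 'X_[witness].
Proof.
move=> P P_min; have [P_prime _ _] := P_min.
have [Pi|nPi] := classic (P 'X_i).
  have [k ik nPk] := minimal_prime_adj_var gens_min.1 gens_supp2 P_min Pi.
  exact: witness_loc_nbr P_prime ik nPk.
by apply: loc_contract_var gens_min.1 P_prime nPi gB supp_B _; rewrite witness_j.
Qed.

Lemma symb1_neq_mon_ideal : ~ (forall f, symb1 I f <-> I f).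
Proof. by move=> symb1E; apply/witness_notin/symb1E/witness_symb1. Qed.

End Witness.

Theorem proposition3p3 (K : fieldType) (n : nat) (gens : seq 'X_{1..n})
  (Hmin : minimal_monomial_gens gens)
  (Hsupp2 : forall m, m \in gens -> support2 m)
  (Hgirth : girth_ge (gadj gens) 6)
  (i j : 'I_n) (Hedge : gadj gens i j) (Halpha : (2 <= alpha gens i j)%N)
  (Hleaf : (forall l, is_leaf (gadj gens) l -> dist_ge (gadj gens) i l 2) \/
           (forall l, is_leaf (gadj gens) l -> dist_ge (gadj gens) j l 2)) :
  ~ (forall f : {mpoly K[n]}, symb1 (@mon_ideal K n gens) f <-> @mon_ideal K n gens f).
Proof.
have oriented x y : gadj gens x y -> (2 <= alpha gens x y)%N ->
    (forall l, is_leaf (gadj gens) l -> dist_ge (gadj gens) x l 2) ->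
    ~ (forall f : {mpoly K[n]}, symb1 (mon_ideal gens) f <-> mon_ideal gens f).
  move=> xy alpha_xy leaf_far.
  have [A [B [[gA gB supp_A supp_B] [_ BAj]]]] := alpha2_crossing_gens Hmin alpha_xy.
  exact: (symb1_neq_mon_ideal Hmin Hsupp2 Hgirth xy gA gB supp_A supp_B BAj leaf_far).
case: Hleaf => leaf_far; first exact: oriented Hedge Halpha leaf_far.
by apply: (oriented j i) leaf_far; rewrite 1?gadj_sym 1?alpha_sym.
Qed.
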